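(* Let $(A,\leq,\cdot,/)$ be a narhoop and let $N$ be a nonempty normal subnarhoop of $A$. Define a relation $\preceq_N$ on $A$ by $x\preceq_N y$ iff $y/x\in N$. Then: (1) for all $x,y,z\in A$, $x\preceq_N y$ implies $xz\preceq_N yz$; (2) for all $x,y,z\in A$, $x\preceq_N y$ implies $x/z\preceq_N y/z$; (3) $\preceq_N$ is a preorder (reflexive and transitive); in particular $y/y\in N$ for all $y\in A$.
   Context: Write $xy$ for $x\cdot y$; $\cdot$ binds more strongly than $/$, and $/$ binds more strongly than $\sqcap$, where $x\sqcap y := (x/y)y$. A right-residuated magma is a structure $(A,\leq,\cdot,/)$ where $(A,\leq)$ is a poset and $xy\leq z\iff x\leq z/y$ for all $x,y,z\in A$. A narhoop is a right-residuated magma such that for all $x,y$: $x\leq y\iff x\sqcap y = x = y\sqcap x$. For $x,y\in A$ define maps $A\to A$ by $\phi_{1,x,y}(z)=((zx)y)/(xy)$, $\phi_{2,x,y}(z)=((zx)/y)/(x/y)$, $\phi_{3,x,y}(z)=(x(zy))/(xy)$, $\phi_{4,x,y}(z)=(x/(zy))/(x/y)$, $\phi_{5,x,y}(z)=(xy)/(x(zy))$, $\phi_{6,x,y}(z)=(x/y)/(x/(zy))$; $\mathrm{Inn}(A)$ is the semigroup of maps generated by all of these under composition. A nonempty subset $N\subseteq A$ is a normal subnarhoop if (i) $N$ is closed under $\cdot$ and $/$; (ii) whenever $x\leq y$ and $x\in N$, then $y\in N$; (iii) $\phi(N)\subseteq N$ for all $\phi\in\mathrm{Inn}(A)$. *)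

Set Implicit Arguments.

Record RRMagma := {
  car :> Type;
  le : car -> car -> Prop;
  mul : car -> car -> car;
  rdiv : car -> car -> car;
  le_refl : forall x, le x x;
  le_trans : forall x y z, le x y -> le y z -> le x z;
  le_antisym : forall x y, le x y -> le y x -> x = y;
  residuation : forall x y z, le (mul x y) z <-> le x (rdiv z y)
}.

Arguments le : clear implicits.
Definition sqcap (A : RRMagma) (x y : A) : A := mul A (rdiv A x y) y.
Arguments sqcap : clear implicits.

Definition is_narhoop (A : RRMagma) : Prop :=
  forall x y : A, le A x y <-> (sqcap A x y = x /\ sqcap A y x = x).

Section Inner.
Variable A : RRMagma.
Local Notation "x * y" := (mul A x y).
Local Notation "x / y" := (rdiv A x y).

Definition phi1 (x y : A) : A -> A := fun z => ((z * x) * y) / (x * y).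
Definition phi2 (x y : A) : A -> A := fun z => ((z * x) / y) / (x / y).
Definition phi3 (x y : A) : A -> A := fun z => (x * (z * y)) / (x * y).
Definition phi4 (x y : A) : A -> A := fun z => (x / (z * y)) / (x / y).
Definition phi5 (x y : A) : A -> A := fun z => (x * y) / (x * (z * y)).
Definition phi6 (x y : A) : A -> A := fun z => (x / y) / (x / (z * y)).

Inductive Inn : (A -> A) -> Prop :=
| Inn1 x y : Inn (phi1 x y)
| Inn2 x y : Inn (phi2 x y)
| Inn3 x y : Inn (phi3 x y)
| Inn4 x y : Inn (phi4 x y)
| Inn5 x y : Inn (phi5 x y)
| Inn6 x y : Inn (phi6 x y)
| Inn_comp f g : Inn f -> Inn g -> Inn (fun z => f (g z)).

Definition normal_subnarhoop (N : A -> Prop) : Prop :=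
  (exists n, N n) /\
  (forall x y, N x -> N y -> N (x * y)) /\
  (forall x y, N x -> N y -> N (x / y)) /\
  (forall x y, le A x y -> N x -> N y) /\
  (forall f, Inn f -> forall z, N z -> N (f z)).

Definition precN (N : A -> Prop) (x y : A) : Prop := N (y / x).
End Inner.
Arguments normal_subnarhoop {A} N.
Arguments precN {A} N x y.
Arguments Inn {A} _.

(* The relation is preserved by right multiplication and right division because
   [phi1 x z] and [phi2 x z] map [y/x] below [yz/xz] and [(y/z)/(x/z)] respectively, and
   [N] is an up-set closed under inner maps. For reflexivity, [phi4 x n] turns [n/n] into
   [(x/n)/(x/n)], and [phi3 (y/x) x] turns [x/x] into [y/y] as soon as [y <= x]; since
   [y <= yn/n], every [y/y] lies in [N]. Transitivity comes from [z/x >= ((z/x)/(y/x))(y/x)]. *)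

Section Residuation.
Variable A : RRMagma.
Local Notation "x <= y" := (le A x y).
Local Notation "x * y" := (mul A x y).
Local Notation "x / y" := (rdiv A x y).

Lemma mul_divr_le (x y : A) : (x / y) * y <= x.
Proof. apply residuation, le_refl. Qed.

Lemma le_mul_divr (x y : A) : x <= (x * y) / y.
Proof. apply residuation, le_refl. Qed.

Lemma le_mul2r (x x' y : A) : x <= x' -> x * y <= x' * y.
Proof.
  intro Hx. apply residuation.
  apply le_trans with x'; [exact Hx | apply le_mul_divr].
Qed.

Lemma le_div2r (x x' y : A) : x <= x' -> x / y <= x' / y.
Proof.
  intro Hx. apply residuation.
  apply le_trans with x; [apply mul_divr_le | exact Hx].
Qed.

Hypothesis narhoopA : is_narhoop A.

Lemma narhoop_divrK (x y : A) : x <= y -> (x / y) * y = x.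
Proof. intro Hxy. exact (proj1 (proj1 (narhoopA x y) Hxy)). Qed.

Lemma narhoop_divrr_mul (x : A) : (x / x) * x = x.
Proof. apply narhoop_divrK, le_refl. Qed.

End Residuation.

Section NormalSubnarhoop.
Variable A : RRMagma.
Local Notation "x <= y" := (le A x y).
Local Notation "x * y" := (mul A x y).
Local Notation "x / y" := (rdiv A x y).

Variable N : A -> Prop.
Hypothesis N_up : forall x y, x <= y -> N x -> N y.
Hypothesis N_inner : forall f, Inn f -> forall z, N z -> N (f z).

Lemma precN_mul2r (x y z : A) : precN N x y -> precN N (x * z) (y * z).
Proof.
  intro Hxy. apply N_up with (phi1 A x z (y / x)).
  - apply le_div2r, le_mul2r, mul_divr_le.
  - apply N_inner; [constructor | exact Hxy].
Qed.

Lemma precN_div2r (x y z : A) : precN N x y -> precN N (x / z) (y / z).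
Proof.
  intro Hxy. apply N_up with (phi2 A x z (y / x)).
  - apply le_div2r, le_div2r, mul_divr_le.
  - apply N_inner; [constructor | exact Hxy].
Qed.

Hypothesis N_mul : forall x y, N x -> N y -> N (x * y).

Lemma precN_trans (x y z : A) : precN N x y -> precN N y z -> precN N x z.
Proof.
  intros Hxy Hyz.
  apply N_up with (((z / x) / (y / x)) * (y / x)); [apply mul_divr_le |].
  apply N_mul; [apply precN_div2r, Hyz | exact Hxy].
Qed.

Hypothesis narhoopA : is_narhoop A.

Lemma N_divrr_divl (x n : A) : N (n / n) -> N ((x / n) / (x / n)).
Proof.
  intro Hn. generalize (N_inner _ (Inn4 A x n) _ Hn).
  unfold phi4. rewrite (narhoop_divrr_mul _ narhoopA). tauto.
Qed.

Lemma N_divrr_le (x y : A) : y <= x -> N (x / x) -> N (y / y).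
Proof.
  intros Hyx Hx. generalize (N_inner _ (Inn3 A (y / x) x) _ Hx).
  unfold phi3. rewrite (narhoop_divrr_mul _ narhoopA), (narhoop_divrK _ narhoopA _ _ Hyx).
  tauto.
Qed.

Hypothesis N_div : forall x y, N x -> N y -> N (x / y).
Hypothesis N_nonempty : exists n, N n.

Lemma N_divrr (y : A) : N (y / y).
Proof.
  destruct N_nonempty as [n Hn].
  apply N_divrr_le with ((y * n) / n); [apply le_mul_divr |].
  apply N_divrr_divl, N_div; exact Hn.
Qed.

Lemma precN_refl (x : A) : precN N x x.
Proof. apply N_divrr. Qed.

End NormalSubnarhoop.

Theorem mainTheorem13 (A : RRMagma) (N : A -> Prop) :
  is_narhoop A -> normal_subnarhoop N ->
  (forall x y z : A, precN N x y -> precN N (mul A x z) (mul A y z)) /\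
  (forall x y z : A, precN N x y -> precN N (rdiv A x z) (rdiv A y z)) /\
  ((forall x : A, precN N x x) /\
   (forall x y z : A, precN N x y -> precN N y z -> precN N x z)) /\
  (forall y : A, N (rdiv A y y)).
Proof.
  intros narhoopA [N_nonempty [N_mul [N_div [N_up N_inner]]]].
  split; [exact (precN_mul2r A N N_up N_inner) |].
  split; [exact (precN_div2r A N N_up N_inner) |].
  split; [split |].
  - exact (precN_refl A N N_inner narhoopA N_div N_nonempty).
  - exact (precN_trans A N N_up N_inner N_mul).
  - exact (N_divrr A N N_inner narhoopA N_div N_nonempty).
Qed.
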